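(* Let $G$ be a looped simple graph and $M$ a transverse matroid of $G$. Then every matroid minor of $M$ is isomorphic to a transverse matroid of some vertex-minor of $G$.
   Context: A looped simple graph is a finite graph in which each vertex carries at most one loop and no two distinct vertices are joined by more than one edge; ''neighbors'' are distinct vertices joined by a non-loop edge. $A(G)$ is the $V(G)\times V(G)$ matrix over $GF(2)$ with diagonal entry $1$ exactly at looped vertices and off-diagonal entry $1$ exactly for adjacent pairs. $IAS(G)=(I\mid A(G)\mid A(G)+I)$ over $GF(2)$, rows indexed by $V(G)$; the $v$-columns of the three blocks are labelled $\phi_G(v),\chi_G(v),\psi_G(v)$. $M[IAS(G)]$ is the binary column matroid of $IAS(G)$ on $W(G)=\{\phi_G(v),\chi_G(v),\psi_G(v):v\in V(G)\}$. A transversal contains exactly one element of each vertex triple $\{\phi_G(v),\chi_G(v),\psi_G(v)\}$; a transverse matroid of $G$ is the restriction of $M[IAS(G)]$ to a transversal. $G_\ell^v$ complements the loop status of $v$; $G_s^v$ complements the adjacency status of every pair of distinct neighbors of $v$; $G_{ns}^v$ does this and also complements the loop status of every neighbor of $v$. A vertex-minor of $G$ is a graph obtained from $G$ by a finite sequence of these operations and vertex deletions. *)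

From HB Require Import structures.
From mathcomp Require Import all_boot all_algebra.
Set Implicit Arguments. Unset Strict Implicit. Unset Printing Implicit Defensive.
Import GRing.Theory.
Local Open Scope ring_scope.

(** * Looped simple graphs, over an ambient finite type [V].
    The vertex set is [verts G]; [loops G v] says v carries a loop;
    [adj G v w] says v, w are joined by a (non-loop) edge. *)
Record lgraph (V : finType) := LGraph {
  verts : {set V};
  loops : V -> bool;
  adj : V -> V -> bool }.

Definition lgraph_wf (V : finType) (G : lgraph V) : Prop :=
  (forall v, loops G v -> v \in verts G) /\
  (forall v w, adj G v w -> (v \in verts G) && (w \in verts G)) /\
  (forall v w, adj G v w = adj G w v) /\
  (forall v, adj G v v = false).

Definition nbr (V : finType) (G : lgraph V) (v w : V) : bool := (v != w) && adj G v w.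

Definition op_l (V : finType) (G : lgraph V) (v : V) : lgraph V :=
  LGraph (verts G) (fun w => loops G w (+) (w == v)) (adj G).

Definition op_s (V : finType) (G : lgraph V) (v : V) : lgraph V :=
  LGraph (verts G) (loops G)
    (fun w x => adj G w x (+) [&& w != x, nbr G v w & nbr G v x]).

Definition op_ns (V : finType) (G : lgraph V) (v : V) : lgraph V :=
  LGraph (verts G) (fun w => loops G w (+) nbr G v w)
    (fun w x => adj G w x (+) [&& w != x, nbr G v w & nbr G v x]).

Definition op_del (V : finType) (G : lgraph V) (v : V) : lgraph V :=
  LGraph (verts G :\ v) (fun w => loops G w && (w != v))
    (fun w x => [&& adj G w x, w != v & x != v]).

Definition vm_step (V : finType) (G H : lgraph V) : Prop :=
  exists2 v, v \in verts G &
    [\/ H = op_l G v, H = op_s G v, H = op_ns G v | H = op_del G v].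

Inductive vertex_minor (V : finType) (G : lgraph V) : lgraph V -> Prop :=
| vm_refl : vertex_minor G G
| vm_trans H K : vertex_minor G H -> vm_step H K -> vertex_minor G K.

Definition AG (V : finType) (G : lgraph V) (w v : V) : 'F_2 :=
  ([&& w \in verts G, v \in verts G &
      if w == v then loops G v else adj G w v] : nat)%:R.

(** elements of W(G): (v, 0) = phi_G(v), (v, 1) = chi_G(v), (v, 2) = psi_G(v).
    The column of IAS(G) labelled by x, evaluated at row w. *)
Definition ias_col (V : finType) (G : lgraph V) (x : V * 'I_3) (w : V) : 'F_2 :=
  let: (v, k) := x in
  let e := ((w == v) : nat)%:R in
  match val k with
  | 0 => e
  | 1 => AG G w v
  | _ => AG G w v + e
  end.

Definition ias_rank (V : finType) (G : lgraph V) (S : {set V * 'I_3}) : nat :=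
  \rank (\matrix_(i < #|S|, j < #|V|) ias_col G (enum_val i) (enum_val j)).

Definition WG (V : finType) (G : lgraph V) : {set V * 'I_3} :=
  [set x | x.1 \in verts G].

Definition gtransversal (V : finType) (G : lgraph V) (T : {set V * 'I_3}) : Prop :=
  T \subset WG G /\
  forall v, v \in verts G -> #|[set k : 'I_3 | (v, k) \in T]| = 1%N.

Record matroid (X : finType) := Matroid {
  mground : {set X};
  mrank : {set X} -> nat }.

Definition tmatroid (V : finType) (G : lgraph V) (T : {set V * 'I_3}) :=
  Matroid T (ias_rank G).

Definition mminor (X : finType) (M : matroid X) (C D : {set X}) : matroid X :=
  Matroid (mground M :\: (C :|: D)) (fun S => (mrank M (S :|: C) - mrank M C)%N).

Definition miso (X Y : finType) (M : matroid X) (N : matroid Y) : Prop :=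
  exists f : X -> Y,
    {in mground M &, injective f} /\ f @: mground M = mground N /\
    forall S : {set X}, S \subset mground M -> mrank N (f @: S) = mrank M S.

From mathcomp Require Import all_boot all_algebra fingroup perm.
From mathcomp Require Import ring zify.
Set Implicit Arguments. Unset Strict Implicit. Unset Printing Implicit Defensive.
Import GRing.Theory.
Local Open Scope ring_scope.

(* Deleting or contracting one element x of the transversal T stays inside
   the class of transverse matroids; induction on |C :|: D| does the rest.
   A local complementation G_ns^u acts on the columns of IAS(G) as an
   invertible change of coordinates followed by a relabelling of the triple
   of u, so a suitable sequence of them turns any nonzero column y at the
   vertex v of x into phi_v = e_v; deleting v then projects every other
   column along e_v, which contracts y.  Taking y = x contracts x (a zero
   column is a loop, and contracting a loop is deleting it).  For deletion,
   isotropy of IAS(G) says that phi_v and chi_v do not both lie in the span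
   of T - x, and contracting one that does not has the effect of deleting x. *)

Lemma mxrank_adds_notin (F : fieldType) m n (U : 'M[F]_(m, n)) (v : 'rV_n) :
  ~~ (v <= U)%MS -> \rank (U + v)%MS = (\rank U).+1.
Proof.
move=> vU; have v0 : v != 0 by apply: contraNneq vU => ->; apply: sub0mx.
have [leUUv eqUUv] := mxrank_leqif_sup (addsmxSl U v).
apply/eqP; rewrite eqn_leq; apply/andP; split.
  by have [+ _] := mxrank_adds_leqif U v; rewrite rank_rV v0 addn1.
by rewrite ltn_neqAle leUUv andbT eqUUv addsmx_sub submx_refl.
Qed.

Lemma sumr_exchange_sym (R : comRingType) (I : finType) (S : {set I})
    (l m b : I -> R) (c : I -> I -> R) :
  {in S &, forall z z', b z' * c z z' = b z * c z' z} ->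
  \sum_(z' in S) m z' * b z' * (\sum_(z in S) l z * c z z') =
  \sum_(z in S) l z * b z * (\sum_(z' in S) m z' * c z' z).
Proof.
move=> bc; under eq_bigr do rewrite mulr_sumr.
under [RHS]eq_bigr do rewrite mulr_sumr.
rewrite exchange_big; apply: eq_bigr => z zS; apply: eq_bigr => z' z'S.
transitivity (m z' * l z * (b z' * c z z')); first by ring.
by rewrite bc //; ring.
Qed.

Section Span.
Variables (F : fieldType) (X : finType) (n : nat).
Implicit Types (f g : X -> 'rV[F]_n) (S A B : {set X}).

Definition span f S := (\sum_(x in S) <<f x>>)%MS.

Lemma spanS f A B : A \subset B -> (span f A <= span f B)%MS.
Proof.
move=> sAB; apply/sumsmx_subP => x xA.
by apply: (sumsmx_sup x) => //; apply: (subsetP sAB).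
Qed.

Lemma span_setU1 f S y : (span f (S :|: [set y]) :=: span f S + f y)%MS.
Proof.
apply/eqmxP/andP; split.
  apply/sumsmx_subP => x; rewrite !inE => /orP[xS|/eqP->].
    by apply: submx_trans (addsmxSl _ _); apply: (sumsmx_sup x).
  by rewrite genmxE; apply: addsmxSr.
rewrite addsmx_sub (spanS _ (subsetUl _ _)) /=.
by rewrite -(genmxE (f y)) (sumsmx_sup y) // !inE eqxx orbT.
Qed.

Lemma span_mulmx f S (P : 'M_n) :
  (span f S *m P :=: span (fun x => f x *m P) S)%MS.
Proof.
apply: eqmx_trans (sumsmxMr _ _ _) _; apply: eqmx_sums => x _.
by apply: eqmx_trans (eqmxMr _ (genmxE _)) (eqmx_sym (genmxE _)).
Qed.

Lemma eq_span f g S : {in S, f =1 g} -> span f S = span g S.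
Proof. by move=> fg; apply: eq_bigr => x /fg ->. Qed.

Lemma rank_span0 f : \rank (span f set0) = 0%N.
Proof. by rewrite /span big_set0 mxrank0. Qed.

Lemma rank_span1 f y : \rank (span f [set y]) = (f y != 0).
Proof. by rewrite /span big_set1 genmxE rank_rV. Qed.

Lemma rank_span_imset f g (s : X -> X) (P : 'M[F]_n) S :
  P \in unitmx -> injective s -> (forall x, g (s x) = f x *m P) ->
  \rank (span g (s @: S)) = \rank (span f S).
Proof.
move=> uP inj_s fg; rewrite /span big_imset; last by move=> x y _ _ /inj_s.
change (\rank (span (g \o s) S) = \rank (span f S)).
rewrite (eq_span (g := fun x => f x *m P)) => [|x _ /=]; last exact: fg.
by rewrite -(span_mulmx f S P) mxrankMfree ?row_free_unit.
Qed.

Lemma rank_span_setU1_0 f S y :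
  f y = 0 -> \rank (span f (S :|: [set y])) = \rank (span f S).
Proof. by move=> fy0; rewrite (span_setU1 f S y) fy0 addsmx0. Qed.

Lemma rank_span_setU1_notin f S S' y : S \subset S' -> ~~ (f y <= span f S')%MS ->
  \rank (span f (S :|: [set y])) = (\rank (span f S)).+1.
Proof.
move=> sSS' fyS'; rewrite (span_setU1 f S y) mxrank_adds_notin //.
by apply: contra fyS' => fyS; apply: submx_trans fyS (spanS f sSS').
Qed.

Lemma rank_span_contract f g (Z : 'M[F]_n) S y :
  Z *m Z = Z -> f y *m Z = 0 -> (1%:M - Z <= f y)%MS -> f y != 0 ->
  {in S, forall x, g x = f x *m Z} ->
  \rank (span f (S :|: [set y])) = (\rank (span g S)).+1.
Proof.
move=> ZZ fyZ sZ fy0 fg; set U := span f S; set e := f y.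
have -> : span g S = span (fun x => f x *m Z) S by apply: eq_span.
rewrite (span_setU1 f S y) -/U -/e -(span_mulmx f S Z).
have -> : (U + e :=: U *m Z + e)%MS.
  have sU1Z : (U *m (1%:M - Z) <= e)%MS by apply: submx_trans (submxMl _ _) sZ.
  have splitU : U *m Z = U - U *m (1%:M - Z) by rewrite mulmxBr mulmx1 opprB addrC subrK.
  apply/eqmxP; rewrite !addsmx_sub !addsmxSr !andbT; apply/andP; split.
    rewrite -[X in (X <= _)%MS](subrK (U *m (1%:M - Z))) -splitU.
    by apply: addmx_sub_adds.
  by rewrite splitU addmx_sub_adds ?eqmx_opp.
rewrite mxrank_adds_notin //; apply/negP => /submxP[D eD].
by case/eqP: fy0; rewrite -fyZ -/e eD -!mulmxA ZZ.
Qed.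

End Span.

Definition b2F (b : bool) : 'F_2 := (b : nat)%:R.

Lemma b2F0 : b2F false = 0. Proof. by []. Qed.
Lemma b2F1 : b2F true = 1. Proof. exact: val_inj. Qed.
Lemma b2F_addb a b : b2F (a (+) b) = b2F a + b2F b.
Proof. by case: a; case: b; apply: val_inj. Qed.
Lemma b2F_andb a b : b2F (a && b) = b2F a * b2F b.
Proof. by case: a; case: b; apply: val_inj. Qed.

Lemma b2F_inj : injective b2F.
Proof. by case; case=> // /(congr1 val). Qed.

Section CharVec.
Variable V : finType.
Local Notation n := #|V|.

Definition charvec (h : pred V) : 'rV['F_2]_n := \row_j b2F (h (enum_val j)).

Lemma eq_charvec h h' : h =1 h' -> charvec h = charvec h'.
Proof. by move=> hh'; apply/rowP => j; rewrite !mxE hh'. Qed.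

Lemma charvec_entry h w : charvec h 0 (enum_rank w) = b2F (h w).
Proof. by rewrite mxE enum_rankK. Qed.

Lemma charvec_eq0 h : (charvec h == 0) = [forall w, ~~ h w].
Proof.
apply/eqP/forallP => [h0 w | h0].
  by move/rowP: h0 => /(_ (enum_rank w)); rewrite charvec_entry mxE; case: (h w).
by apply/rowP => j; rewrite !mxE; move: (h0 (enum_val j)); case: (h _).
Qed.

Definition transvec_mx (u : V) (a : pred V) : 'M['F_2]_n :=
  \matrix_(i, j) b2F ((i == j) (+) ((i == enum_rank u) && a (enum_val j))).

Lemma charvec_transvec h u a :
  charvec h *m transvec_mx u a = charvec (fun w => h w (+) (h u && a w)).
Proof.
apply/rowP => j; rewrite !mxE.
under eq_bigr do rewrite !mxE b2F_addb mulrDr.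
rewrite big_split /= (bigD1 j) //= big1 => [|i /negPf ->]; last by rewrite mulr0.
rewrite (bigD1 (enum_rank u)) //= big1 => [|i /negPf ->]; last by rewrite mulr0.
by rewrite !eqxx b2F1 enum_rankK mulr1 !addr0 /= b2F_addb b2F_andb.
Qed.

Lemma transvec_mx_unit u a : a u = false -> transvec_mx u a \in unitmx.
Proof.
move=> au; suff /mulmx1_unit[] : transvec_mx u a *m transvec_mx u a = 1%:M by [].
apply/row_matrixP => i; rewrite row_mul.
have -> : row i (transvec_mx u a) =
    charvec (fun w => (enum_rank w == i) (+) ((i == enum_rank u) && a w)).
  by apply/rowP => j; rewrite !mxE enum_valK (eq_sym j).
rewrite charvec_transvec; apply/rowP => j; rewrite !mxE enum_valK au andbF addbF.
by rewrite [enum_rank u == i]eq_sym -addbA addbb addbF eq_sym.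
Qed.

Definition vanish_mx (v : V) : 'M['F_2]_n := diag_mx (charvec (predC1 v)).

Lemma charvec_vanish h v : charvec h *m vanish_mx v = charvec (predI h (predC1 v)).
Proof. by rewrite mul_mx_diag; apply/rowP => j; rewrite !mxE b2F_andb. Qed.

Lemma vanish_mx_idem v : vanish_mx v *m vanish_mx v = vanish_mx v.
Proof.
rewrite {1}/vanish_mx mul_mx_diag; apply/matrixP => i j; rewrite !mxE.
by case: (i =P j) => [->|]; rewrite ?mulr1n -?b2F_andb ?andbb // mulr0n mul0r.
Qed.

Lemma charvec1_vanish v : charvec (pred1 v) *m vanish_mx v = 0.
Proof.
rewrite charvec_vanish; apply/eqP; rewrite charvec_eq0.
by apply/forallP => w /=; case: (w == v).
Qed.

Lemma vanish_mx_compl v : (1%:M - vanish_mx v <= charvec (pred1 v))%MS.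
Proof.
apply/row_subP => i; apply/sub_rVP; exists (b2F (enum_val i == v)).
apply/rowP => j; rewrite !mxE; case: (i =P j) => [<-|nij].
  by rewrite /=; case: (enum_val i == v); apply: val_inj.
rewrite /= mulr0n subr0; case: (enum_val i =P v) => [eiv|]; last by rewrite mul0r.
case: (enum_val j =P v) => [ejv|]; last by rewrite mulr0.
by case: nij; apply: enum_val_inj; rewrite eiv ejv.
Qed.

End CharVec.

Lemma charvec_span_coord (V X : finType) (f : X -> pred V) (S : {set X}) h :
  (charvec h <= span (fun x => charvec (f x)) S)%MS ->
  exists l : X -> 'F_2, forall w, b2F (h w) = \sum_(z in S) l z * b2F (f z w).
Proof.
move=> /sub_sums_genmxP[u eh]; exists (fun z => u z 0 0) => w.
rewrite -charvec_entry eh summxE; apply: eq_bigr => z _.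
by rewrite !mxE big_ord1 charvec_entry.
Qed.

Lemma imsetD_in (aT rT : finType) (f : aT -> rT) (A B : {set aT}) :
  B \subset A -> {in A &, injective f} -> f @: (A :\: B) = f @: A :\: f @: B.
Proof.
move=> sBA f_inj; apply/setP => y; apply/imsetP/setDP => [[a /setDP[aA aB] ->]|].
  split; first exact: imset_f.
  apply: contra aB => /imsetP[b bB /f_inj ab].
  by rewrite ab // (subsetP sBA).
move=> [/imsetP[a aA ->] faB]; exists a => //.
by rewrite inE aA andbT; apply: contra faB; apply: imset_f.
Qed.

Definition miso_by (X Y : finType) (f : X -> Y) (M : matroid X) (N : matroid Y) :=
  {in mground M &, injective f} /\ f @: mground M = mground N /\
  forall S : {set X}, S \subset mground M -> mrank N (f @: S) = mrank M S.

Section MatroidIso.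
Variables X Y Z : finType.
Implicit Types (M : matroid X) (C D : {set X}).

Lemma miso_byP (f : X -> Y) M N : miso_by f M N -> miso M N.
Proof. by exists f. Qed.

Lemma miso_by_comp (f : X -> Y) (g : Y -> Z) M N (K : matroid Z) :
  miso_by f M N -> miso_by g N K -> miso_by (g \o f) M K.
Proof.
move=> [f_inj [fM fr]] [g_inj [gN gr]]; split; last split.
- move=> a b aM bM /g_inj; rewrite -fM => /(_ (imset_f _ aM) (imset_f _ bM)).
  exact: f_inj.
- by rewrite imset_comp fM.
move=> S sSM; rewrite imset_comp gr ?fr // -fM.
exact: imsetS.
Qed.

Lemma miso_by_mminor (f : X -> Y) M (N : matroid Y) C D :
  miso_by f M N -> C \subset mground M -> D \subset mground M ->
  miso_by f (mminor M C D) (mminor N (f @: C) (f @: D)).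
Proof.
move=> [f_inj [fM fr]] sCM sDM.
have sCDM : C :|: D \subset mground M by rewrite subUset sCM.
have sM : mground M :\: (C :|: D) \subset mground M := subsetDl _ _.
split; last split.
- by move=> a b /(subsetP sM) aM /(subsetP sM) bM /f_inj->.
- by rewrite /= -fM -imsetU imsetD_in.
move=> S /= sS; have sSM : S \subset mground M := subset_trans sS sM.
by rewrite -imsetU !fr // subUset sCM sSM.
Qed.

Lemma mminor_mminor M C1 D1 C2 D2 :
  (forall A B : {set X}, A \subset B -> mrank M A <= mrank M B)%N ->
  miso_by id (mminor M (C1 :|: C2) (D1 :|: D2)) (mminor (mminor M C1 D1) C2 D2).
Proof.
move=> rankS; split; last split.
- by move=> a b _ _.
- by rewrite imset_id /= setDDl setUACA.
move=> S _; rewrite imset_id /= -setUA [C2 :|: C1]setUC setUA.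
have le1 : (mrank M C1 <= mrank M (C1 :|: C2))%N by apply: rankS; apply: subsetUl.
have le2 : (mrank M (C1 :|: C2) <= mrank M (S :|: C1 :|: C2))%N.
  by apply: rankS; rewrite -setUA subsetUr.
lia.
Qed.

Lemma mminor0 M : mrank M set0 = 0%N -> miso_by id (mminor M set0 set0) M.
Proof.
move=> r0; split; last split.
- by move=> a b _ _.
- by rewrite imset_id /= setU0 setD0.
by move=> S _; rewrite imset_id /= setU0 r0 subn0.
Qed.

End MatroidIso.

Section IAS.
Variable V : finType.
Implicit Types (G : lgraph V) (u v w z : V) (S : {set V * 'I_3}).

Definition adjb G w z : bool :=
  [&& w \in verts G, z \in verts G & if w == z then loops G z else adj G w z].

Definition ias_bit G (x : V * 'I_3) w : bool :=
  let: (v, k) := x in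
  match val k with
  | 0 => w == v
  | 1 => adjb G w v
  | _ => adjb G w v (+) (w == v)
  end.

Definition ias_vec G x := charvec (ias_bit G x).

Lemma ias_rank_span G S : ias_rank G S = \rank (span (ias_vec G) S).
Proof.
have rowE i : row i (\matrix_(i < #|S|, j < #|V|) ias_col G (enum_val i) (enum_val j))
    = ias_vec G (enum_val i).
  apply/rowP => j; rewrite !mxE.
  by case: (enum_val i) => v [[|[|k]] ?] //=; rewrite b2F_addb.
rewrite /ias_rank /span (big_enum_val (fun x => <<ias_vec G x>>%MS)) /=.
apply: eqmx_rank; apply/andP; split.
  by apply/row_subP => i; rewrite rowE; apply: (sumsmx_sup i); rewrite ?genmxE.
by apply/sumsmx_subP => i _; rewrite genmxE -rowE row_sub.
Qed.

Lemma ias_rankS G S S' : S \subset S' -> (ias_rank G S <= ias_rank G S')%N.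
Proof. by move=> sSS'; rewrite !ias_rank_span mxrankS ?spanS. Qed.

Lemma ias_rank0 G : ias_rank G set0 = 0%N.
Proof. by rewrite ias_rank_span rank_span0. Qed.

End IAS.

Section LocalOps.
Variable V : finType.
Implicit Types (G : lgraph V) (u v w z : V).

Lemma nbr_verts G u w :
  lgraph_wf G -> nbr G u w -> (u \in verts G) && (w \in verts G).
Proof. by move=> [_ [adjV _]] /andP[_ /adjV]. Qed.

Lemma nbr_sym G u w : lgraph_wf G -> nbr G u w = nbr G w u.
Proof. by move=> [_ [_ [adjC _]]]; rewrite /nbr eq_sym adjC. Qed.

Lemma nbrxx G u : nbr G u u = false.
Proof. by rewrite /nbr eqxx. Qed.

Lemma adjb_sym G w z : lgraph_wf G -> adjb G w z = adjb G z w.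
Proof.
move=> [_ [_ [adjC _]]]; rewrite /adjb eq_sym.
by case: (z =P w) => [->|_]; last rewrite adjC; case: (w \in verts G); case: (z \in verts G).
Qed.

Lemma adjb_nbr G w u : lgraph_wf G -> u \in verts G ->
  adjb G w u = nbr G u w (+) ((w == u) && loops G u).
Proof.
move=> [_ [adjV [adjC _]]] uV; rewrite /adjb /nbr uV eq_sym.
case: (u =P w) => [<-|_] /=; first by rewrite uV.
rewrite addbF adjC; case A: (adj G u w); last by rewrite andbF.
by case/andP: (adjV _ _ A) => _ ->.
Qed.

Lemma adjb_op_ns G u w z : lgraph_wf G ->
  adjb (op_ns G u) w z = adjb G w z (+) (nbr G u w && nbr G u z).
Proof.
move=> wfG; rewrite /adjb /=.
case: (w =P z) => [<-|/eqP wz] /=.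
  rewrite andbb; case N: (nbr G u w); last by rewrite !addbF.
  by have /andP[_ ->] := nbr_verts wfG N.
case Nw: (nbr G u w); case Nz: (nbr G u z); rewrite /= ?addbF //.
have /andP[_ ->] := nbr_verts wfG Nw.
by have /andP[_ ->] := nbr_verts wfG Nz.
Qed.

Lemma adjb_op_del G v w z :
  adjb (op_del G v) w z = [&& adjb G w z, w != v & z != v].
Proof.
rewrite /adjb /= !inE.
case: (w =P z) => [->|_]; first by case: (z != v); rewrite ?andbF ?andbT.
by case: (w != v); case: (z != v); rewrite ?andbF ?andbT.
Qed.

Lemma lgraph_wf_op_ns G u : lgraph_wf G -> lgraph_wf (op_ns G u).
Proof.
move=> wfG; have [loopV [adjV [adjC adjI]]] := wfG; split => /=.
  move=> w; case N: (nbr G u w); first by case/andP: (nbr_verts wfG N).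
  by rewrite addbF; apply: loopV.
split.
  move=> w x; case A: (adj G w x); first by move=> _; apply: adjV.
  by move=> /and3P[_ /(nbr_verts wfG)/andP[_ ->] /(nbr_verts wfG)/andP[_ ->]].
split=> [w x|w]; last by rewrite adjI eqxx.
by rewrite adjC eq_sym; case: (x != w); rewrite //= andbC.
Qed.

Lemma lgraph_wf_op_del G v : lgraph_wf G -> lgraph_wf (op_del G v).
Proof.
move=> [loopV [adjV [adjC adjI]]]; split => /=.
  by move=> w /andP[/loopV wV wv]; rewrite !inE wv.
split.
  by move=> w x /and3P[/adjV/andP[wV xV] wv xv]; rewrite !inE wV xV wv xv.
split=> [w x|w]; last by rewrite adjI.
by rewrite adjC; case: (w != v); case: (x != v); rewrite ?andbF ?andbT.
Qed.

Lemma vertex_minor_trans G H K :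
  vertex_minor G H -> vertex_minor H K -> vertex_minor G K.
Proof. by move=> GH; elim=> // K1 K2 _ GK1 /(vm_trans GK1). Qed.

Lemma vertex_minor_ns G u : u \in verts G -> vertex_minor G (op_ns G u).
Proof. by move=> uV; apply: vm_trans (vm_refl G) _; exists u => //; apply: Or43. Qed.

Lemma vertex_minor_del G v : v \in verts G -> vertex_minor G (op_del G v).
Proof. by move=> vV; apply: vm_trans (vm_refl G) _; exists v => //; apply: Or44. Qed.

End LocalOps.

Definition iphi : 'I_3 := ord0.
Definition ichi : 'I_3 := Ordinal (isT : (1 < 3)%N).
Definition ipsi : 'I_3 := Ordinal (isT : (2 < 3)%N).

Section Similarity.
Variable V : finType.
Implicit Types (G H : lgraph V) (u v w z : V).

Definition ns_relabel G u z : {perm 'I_3} :=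
  if z == u then (if loops G u then tperm iphi ichi else tperm iphi ipsi) else 1%g.

Lemma ias_vec_op_ns G u z k : lgraph_wf G -> u \in verts G ->
  ias_vec (op_ns G u) (z, ns_relabel G u z k) =
  ias_vec G (z, k) *m transvec_mx u (nbr G u).
Proof.
move=> wfG uV; rewrite charvec_transvec; apply: eq_charvec => w.
rewrite /ns_relabel; case: (z =P u) => [->|/eqP zu].
  rewrite /ias_bit !adjb_op_ns // !adjb_nbr // nbrxx !andbF !addbF eqxx.
  by case: (nbr G u w); case: (w == u); case: (loops G u);
    case: k => [[|[|[|]]] ?]; rewrite ?permE.
have uz : adjb G u z = nbr G u z by rewrite adjb_sym // adjb_nbr // (negPf zu) addbF.
rewrite perm1 /ias_bit !adjb_op_ns // uz (eq_sym u) (negPf zu).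
by case: k => [[|[|[|]]] ?] //=; rewrite ?andbF ?addbF // andbC // addbAC.
Qed.

Lemma ias_vec_op_del G v z k : z != v ->
  ias_vec (op_del G v) (z, k) = ias_vec G (z, k) *m vanish_mx v.
Proof.
move=> zv; rewrite charvec_vanish; apply: eq_charvec => w /=.
rewrite /ias_bit !adjb_op_del zv andbT.
case: k => [[|[|[|]]] ?] //=; first by case: (w =P z) => [->|].
by case: (w =P z) => [->|_]; rewrite ?zv ?andbT ?addbF.
Qed.

Definition ias_similar G H (pi : V -> {perm 'I_3}) : Prop :=
  [/\ vertex_minor G H, lgraph_wf H, verts H = verts G &
      exists2 P, P \in unitmx &
        forall z k, ias_vec H (z, pi z k) = ias_vec G (z, k) *m P].

Lemma ias_similar_refl G : lgraph_wf G -> ias_similar G G (fun=> 1%g).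
Proof.
split=> //; first exact: vm_refl.
by exists 1%:M => [|z k]; rewrite ?unitmx1 ?perm1 ?mulmx1.
Qed.

Lemma ias_similar_trans G1 G2 G3 pi1 pi2 :
  ias_similar G1 G2 pi1 -> ias_similar G2 G3 pi2 ->
  ias_similar G1 G3 (fun z => pi1 z * pi2 z)%g.
Proof.
move=> [m12 _ V21 [P1 uP1 eP1]] [m23 wf3 V32 [P2 uP2 eP2]]; split=> //.
- exact: vertex_minor_trans m12 m23.
- by rewrite V32.
exists (P1 *m P2) => [|z k]; first by rewrite unitmx_mul uP1.
by rewrite permM eP2 eP1 mulmxA.
Qed.

Lemma ias_similar_ns G u : lgraph_wf G -> u \in verts G ->
  ias_similar G (op_ns G u) (ns_relabel G u).
Proof.
move=> wfG uV; split=> //.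
- exact: vertex_minor_ns.
- exact: lgraph_wf_op_ns.
exists (transvec_mx u (nbr G u)) => [|z k]; first by rewrite transvec_mx_unit ?nbrxx.
exact: ias_vec_op_ns.
Qed.

End Similarity.

Section ReachPhi.
Variable V : finType.
Implicit Types (G H : lgraph V) (v w : V).

Lemma ias_similar_phi_diag G v k : lgraph_wf G -> v \in verts G ->
  ias_bit G (v, k) v -> exists H pi, ias_similar G H pi /\ pi v k = iphi.
Proof.
move=> wfG vV; rewrite /ias_bit /adjb vV eqxx /=.
case: k => [[|[|[|]]] ?] //= loop_v.
- by exists G, (fun=> 1%g); rewrite perm1; split; [apply: ias_similar_refl|apply: val_inj].
- exists (op_ns G v), (ns_relabel G v); split; first exact: ias_similar_ns.
  by rewrite /ns_relabel eqxx loop_v permE; apply: val_inj.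
- exists (op_ns G v), (ns_relabel G v); split; first exact: ias_similar_ns.
  by rewrite addbT in loop_v; rewrite /ns_relabel eqxx (negPf loop_v) permE; apply: val_inj.
Qed.

Lemma ias_similar_phi G v k : lgraph_wf G -> v \in verts G ->
  ias_vec G (v, k) != 0 -> exists H pi, ias_similar G H pi /\ pi v k = iphi.
Proof.
move=> wfG vV; case diag: (ias_bit G (v, k) v).
  by move=> _; apply: ias_similar_phi_diag.
rewrite charvec_eq0 => /forallPn[w /negbNE kw].
have wv : w != v by apply: contraTneq kw => ->; rewrite diag.
have vw : nbr G v w.
  move: kw; rewrite /ias_bit (negPf wv) adjb_nbr // (negPf wv) /= addbF.
  by case: k diag => [[|[|[|]]] ?]; rewrite //= addbF.
have /andP[_ wV] := nbr_verts wfG vw.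
have simw := ias_similar_ns wfG wV.
have relv : ns_relabel G w v = 1%g by rewrite /ns_relabel eq_sym (negPf wv).
have [_ wf1 _ _] := simw.
have diag1 : ias_bit (op_ns G w) (v, k) v.
  have /rowP/(_ (enum_rank v)) := ias_vec_op_ns v k wfG wV.
  rewrite relv perm1 charvec_transvec !charvec_entry => /b2F_inj->.
  by rewrite diag kw nbr_sym.
have vV1 : v \in verts (op_ns G w) := vV.
have [H [pi [simH piv]]] := ias_similar_phi_diag wf1 vV1 diag1.
exists H, (fun z => ns_relabel G w z * pi z)%g; split.
  exact: ias_similar_trans simH.
by rewrite permM relv perm1.
Qed.

End ReachPhi.

Section Transversal.
Variable V : finType.
Implicit Types (G : lgraph V) (T : {set V * 'I_3}).

Lemma gtransversal_verts G T a : gtransversal G T -> a \in T -> a.1 \in verts G.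
Proof. by move=> [sTW _] /(subsetP sTW); rewrite inE. Qed.

Lemma gtransversal_inj G T a b :
  gtransversal G T -> a \in T -> b \in T -> a.1 = b.1 -> a = b.
Proof.
move=> trT aT bT ab; have [_ /(_ _ (gtransversal_verts trT aT))] := trT.
move=> /eqP/cards1P[k Tk].
have : a.2 \in [set k | (a.1, k) \in T] by rewrite inE -surjective_pairing.
have : b.2 \in [set k | (a.1, k) \in T] by rewrite inE ab -surjective_pairing.
rewrite Tk !inE => /eqP bk /eqP ak.
by rewrite [a]surjective_pairing [b]surjective_pairing ab ak bk.
Qed.

Lemma gtransversalD1 G T x z :
  gtransversal G T -> x \in T -> z \in T :\ x -> z.1 != x.1.
Proof.
move=> trT xT /setD1P[zx zT]; apply: contra zx => /eqP zx1.
by apply/eqP; apply: gtransversal_inj trT zT xT zx1.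
Qed.

End Transversal.

Definition phi_coef (k : 'I_3) : 'F_2 := b2F (val k != 1%N).
Definition adj_coef (k : 'I_3) : 'F_2 := b2F (val k != 0%N).

Section Isotropy.
Variable V : finType.
Implicit Types (G : lgraph V) (T : {set V * 'I_3}).

Lemma ias_bit_coef G u k w :
  b2F (ias_bit G (u, k) w) = phi_coef k * b2F (w == u) + adj_coef k * b2F (adjb G w u).
Proof.
rewrite /ias_bit /phi_coef /adj_coef.
by case: k => [[|[|[|]]] ?] //=; rewrite ?b2F1 ?mul1r ?mul0r ?addr0 ?add0r // b2F_addb addrC.
Qed.

Lemma ias_bit_swap G u u' k k' : lgraph_wf G -> u != u' ->
  adj_coef k' * b2F (ias_bit G (u, k) u') = adj_coef k * b2F (ias_bit G (u', k') u).
Proof.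
move=> wfG uu'; rewrite !ias_bit_coef (negPf uu') eq_sym (negPf uu') adjb_sym //.
by rewrite !mulr0 !add0r mulrCA.
Qed.

(* The isotropy of [IAS G]: the columns [phi_v] and [chi_v] pair to [1] under
   the symmetric form induced by [A G], while the columns of the other
   vertices of a transversal pair to [0] with each other and with both. *)
Lemma ias_isotropic G T x : lgraph_wf G -> gtransversal G T -> x \in T ->
  ~~ ((ias_vec G (x.1, iphi) <= span (ias_vec G) (T :\ x))%MS &&
      (ias_vec G (x.1, ichi) <= span (ias_vec G) (T :\ x))%MS).
Proof.
move=> wfG trT xT; set v := x.1; set S := T :\ x.
have Sv z : z \in S -> z.1 != v by apply: gtransversalD1 trT xT.
pose c (z z' : V * 'I_3) := b2F (ias_bit G z z'.1).
apply/negP => /andP[].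
move=> /(@charvec_span_coord _ _ (ias_bit G))[l phi_v].
move=> /(@charvec_span_coord _ _ (ias_bit G))[m chi_v].
have swap : {in S &, forall z z', adj_coef z'.2 * c z z' = adj_coef z.2 * c z' z}.
  move=> [u k] [u' k'] zS z'S /=; case: (eqVneq u u') => [uu'|]; last exact: ias_bit_swap.
  have ST : S \subset T := subD1set T x.
  have [_ <-] := gtransversal_inj trT (subsetP ST _ zS) (subsetP ST _ z'S) uu'.
  by rewrite uu'.
have := sumr_exchange_sym l m swap.
have -> : \sum_(z' in S) m z' * adj_coef z'.2 * (\sum_(z in S) l z * c z z') = 0.
  by apply: big1 => z' z'S; rewrite -phi_v /= (negPf (Sv _ z'S)) b2F0 mulr0.
have -> : \sum_(z in S) l z * adj_coef z.2 * (\sum_(z' in S) m z' * c z' z) = 1.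
  transitivity (b2F (ias_bit G (v, iphi) v)); last by rewrite /= eqxx b2F1.
  rewrite phi_v; apply: eq_bigr => z zS; rewrite -chi_v /= adjb_sym //.
  by rewrite [z]surjective_pairing ias_bit_coef eq_sym (negPf (Sv _ zS)) mulr0 add0r mulrA.
by move/eqP; rewrite eq_sym oner_eq0.
Qed.

End Isotropy.

Section Contraction.
Variable V : finType.
Implicit Types (G H : lgraph V) (T A : {set V * 'I_3}).

Definition relabel (pi : V -> {perm 'I_3}) (a : V * 'I_3) := (a.1, pi a.1 a.2).

Lemma relabel_inj pi : injective (relabel pi).
Proof. by move=> [u k] [u' k'] [/= <-] /perm_inj->. Qed.

Lemma gtransversal_relabel G H T x pi :
  gtransversal G T -> x \in T -> verts H = verts G :\ x.1 ->
  gtransversal H (relabel pi @: (T :\ x)).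
Proof.
move=> trT xT VH; split.
  apply/subsetP => _ /imsetP[a aTx ->]; rewrite inE VH /= in_setD1.
  have aT : a \in T := subsetP (subD1set T x) _ aTx.
  by rewrite (gtransversalD1 trT xT aTx) (gtransversal_verts trT aT).
move=> u; rewrite VH => /setD1P[ux uV].
have -> : [set k | (u, k) \in relabel pi @: (T :\ x)] = pi u @: [set k | (u, k) \in T].
  apply/setP => k; rewrite !inE; apply/imsetP/imsetP => [[a /setD1P[_ aT] [-> ->]]|].
    by exists a.2; rewrite // inE -surjective_pairing.
  move=> [k0]; rewrite inE => uk0T ->; exists (u, k0) => //.
  by rewrite in_setD1 uk0T andbT; apply: contraNneq ux => <-.
by rewrite card_imset; [have [_ ->] := trT | exact: perm_inj].
Qed.

Lemma ias_contract_vertex G T x y :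
  lgraph_wf G -> gtransversal G T -> x \in T -> y.1 = x.1 -> ias_vec G y != 0 ->
  exists H (s : V * 'I_3 -> V * 'I_3),
    [/\ vertex_minor G H, lgraph_wf H, injective s,
        gtransversal H (s @: (T :\ x)) &
        forall A, A \subset T :\ x ->
          (ias_rank H (s @: A)).+1 = ias_rank G (A :|: [set y])].
Proof.
move=> wfG trT xT yx y0; set v := x.1.
have vV : v \in verts G by apply: gtransversal_verts trT xT.
have Ey : y = (v, y.2) by rewrite [y]surjective_pairing yx.
rewrite Ey in y0.
have [G' [pi [[mG' wfG' VG' [P uP eP]] piy]]] := ias_similar_phi wfG vV y0.
have vV' : v \in verts G' by rewrite VG'.
exists (op_del G' v), (relabel pi); split.
- exact: vertex_minor_trans mG' (vertex_minor_del vV').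
- exact: lgraph_wf_op_del.
- exact: relabel_inj.
- by apply: gtransversal_relabel trT xT _; rewrite /= VG'.
move=> A sA; rewrite !ias_rank_span.
have eG' a : ias_vec G' (relabel pi a) = ias_vec G a *m P.
  by rewrite /relabel eP -surjective_pairing.
rewrite -(rank_span_imset (A :|: [set y]) uP (@relabel_inj pi) eG').
rewrite imsetU imset_set1 Ey /relabel /= piy.
have phiE : ias_vec G' (v, iphi) = charvec (pred1 v) by apply: eq_charvec.
apply/esym/rank_span_contract; rewrite ?phiE.
- exact: vanish_mx_idem.
- exact: charvec1_vanish.
- exact: vanish_mx_compl.
- by rewrite charvec_eq0; apply/forallPn; exists v; rewrite /= eqxx.
move=> _ /imsetP[a aA ->]; apply: ias_vec_op_del.
exact: gtransversalD1 trT xT (subsetP sA _ aA).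
Qed.

End Contraction.

Section Minors.
Variable V : finType.
Implicit Types (G H : lgraph V) (T A C D : {set V * 'I_3}).

Lemma miso_by_tmatroid H (s : V * 'I_3 -> V * 'I_3) N E :
  injective s -> mground N = E ->
  (forall A, A \subset E -> ias_rank H (s @: A) = mrank N A) ->
  miso_by s N (tmatroid H (s @: E)).
Proof. by move=> s_inj NE rk; rewrite /miso_by NE; split=> // a b _ _ /s_inj. Qed.

Lemma ias_delete_vertex G T x :
  lgraph_wf G -> gtransversal G T -> x \in T ->
  exists H (s : V * 'I_3 -> V * 'I_3),
    [/\ vertex_minor G H, lgraph_wf H, injective s,
        gtransversal H (s @: (T :\ x)) &
        forall A, A \subset T :\ x -> ias_rank H (s @: A) = ias_rank G A].
Proof.
move=> wfG trT xT; set S := T :\ x.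
have [y [yx yS]] : exists y, y.1 = x.1 /\ ~~ (ias_vec G y <= span (ias_vec G) S)%MS.
  have := ias_isotropic wfG trT xT; rewrite negb_and.
  by case/orP=> yS; [exists (x.1, iphi) | exists (x.1, ichi)].
have y0 : ias_vec G y != 0 by apply: contraNneq yS => ->; apply: sub0mx.
have [H [s [mH wfH s_inj trH rkH]]] := ias_contract_vertex wfG trT xT yx y0.
exists H, s; split=> // A sA; apply/succn_inj; rewrite rkH //.
by rewrite !ias_rank_span (rank_span_setU1_notin sA yS).
Qed.

Lemma tmatroid_delete G T x :
  lgraph_wf G -> gtransversal G T -> x \in T ->
  exists H (s : V * 'I_3 -> V * 'I_3),
    [/\ vertex_minor G H, lgraph_wf H, gtransversal H (s @: (T :\ x)) &
        miso_by s (mminor (tmatroid G T) set0 [set x]) (tmatroid H (s @: (T :\ x)))].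
Proof.
move=> wfG trT xT; have [H [s [mH wfH s_inj trH rkH]]] := ias_delete_vertex wfG trT xT.
exists H, s; split=> //; apply: miso_by_tmatroid => //=; first by rewrite set0U.
by move=> A sA; rewrite setU0 ias_rank0 subn0 rkH.
Qed.

Lemma tmatroid_contract G T x :
  lgraph_wf G -> gtransversal G T -> x \in T ->
  exists H (s : V * 'I_3 -> V * 'I_3),
    [/\ vertex_minor G H, lgraph_wf H, gtransversal H (s @: (T :\ x)) &
        miso_by s (mminor (tmatroid G T) [set x] set0) (tmatroid H (s @: (T :\ x)))].
Proof.
move=> wfG trT xT; have [x0|x_n0] := eqVneq (ias_vec G x) 0.
  have [H [s [mH wfH s_inj trH rkH]]] := ias_delete_vertex wfG trT xT.
  exists H, s; split=> //; apply: miso_by_tmatroid => //=; first by rewrite setU0.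
  move=> A sA; rewrite rkH // !ias_rank_span rank_span_setU1_0 //.
  by rewrite rank_span1 x0 eqxx subn0.
have [H [s [mH wfH s_inj trH rkH]]] := ias_contract_vertex wfG trT xT erefl x_n0.
exists H, s; split=> //; apply: miso_by_tmatroid => //=; first by rewrite setU0.
by move=> A sA; rewrite -rkH // [ias_rank G _]ias_rank_span rank_span1 x_n0 subn1.
Qed.

End Minors.

Section Realization.
Variable V : finType.
Implicit Types (G H : lgraph V) (T A C D : {set V * 'I_3}).

Lemma tmatroid_minor1 G T C D x :
  lgraph_wf G -> gtransversal G T -> x \in T -> x \in C :|: D -> [disjoint C & D] ->
  exists H (s : V * 'I_3 -> V * 'I_3),
    [/\ vertex_minor G H, lgraph_wf H, gtransversal H (s @: (T :\ x)) &
        miso_by s (mminor (tmatroid G T) (C :&: [set x]) (D :&: [set x]))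
                  (tmatroid H (s @: (T :\ x)))].
Proof.
move=> wfG trT xT xCD dCD.
have setI1_mem A : x \in A -> A :&: [set x] = [set x].
  by move=> xA; apply/setIidPr; rewrite sub1set.
have setI1_nmem A : x \notin A -> A :&: [set x] = set0.
  by move=> xA; apply/disjoint_setI0; rewrite disjoint_sym disjoints1.
case/setUP: xCD => [xC|xD].
  by rewrite setI1_mem // setI1_nmem ?(disjointFr dCD xC) //; apply: tmatroid_contract.
by rewrite setI1_nmem ?(disjointFl dCD xD) // setI1_mem //; apply: tmatroid_delete.
Qed.

Lemma tmatroid_minor_realizable G T C D :
  lgraph_wf G -> gtransversal G T -> C \subset T -> D \subset T -> [disjoint C & D] ->
  exists H T', [/\ vertex_minor G H, lgraph_wf H, gtransversal H T' &
                   miso (mminor (tmatroid G T) C D) (tmatroid H T')].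
Proof.
have [n] := ubnP #|C :|: D|; elim: n => // n IH in G T C D *.
rewrite ltnS => CDn wfG trT sCT sDT dCD.
have [/eqP|[x xCD]] := set_0Vmem (C :|: D).
  rewrite setU_eq0 => /andP[/eqP-> /eqP->]; exists G, T; split=> //; first exact: vm_refl.
  exact/miso_byP/mminor0/ias_rank0.
have xT : x \in T by case/setUP: xCD => [/(subsetP sCT)|/(subsetP sDT)].
have [H1 [s [mH1 wfH1 trH1 iso1]]] := tmatroid_minor1 wfG trT xT xCD dCD.
have ground1 : mground (mminor (tmatroid G T) (C :&: [set x]) (D :&: [set x])) = T :\ x.
  by rewrite /= -setIUl; congr (_ :\: _); apply/setIidPr; rewrite sub1set.
have sCx : C :\ x \subset T :\ x by apply: setSD.
have sDx : D :\ x \subset T :\ x by apply: setSD.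
have [s_inj _] := iso1; rewrite ground1 in s_inj.
have card1 : (#|s @: (C :\ x) :|: s @: (D :\ x)| < n)%N.
  rewrite -imsetU -setDUl card_in_imset; last first.
    by apply: sub_in2 s_inj => a; apply/subsetP; rewrite setDUl subUset sCx.
  by apply: leq_trans CDn; rewrite (cardsD1 x (C :|: D)) xCD.
have disj1 : [disjoint s @: (C :\ x) & s @: (D :\ x)].
  rewrite -setI_eq0 -imsetI; last first.
    by move=> a b /(subsetP sCx) aT /(subsetP sDx) bT; apply: s_inj.
  rewrite imset_eq0 setI_eq0.
  exact: disjointWl (subD1set C x) (disjointWr (subD1set D x) dCD).
have [H [T' [mH wfH trH [g iso2]]]] :=
  IH H1 _ _ _ card1 wfH1 trH1 (imsetS s sCx) (imsetS s sDx) disj1.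
exists H, T'; split=> //; first exact: vertex_minor_trans mH1 mH.
rewrite -(setID C [set x]) -(setID D [set x]); apply: miso_byP.
apply: miso_by_comp (@mminor_mminor _ (tmatroid G T) _ _ _ _ (@ias_rankS _ G)) _.
by apply: miso_by_comp (miso_by_mminor iso1 _ _) iso2; rewrite ground1.
Qed.

End Realization.

Local Close Scope ring_scope.

Theorem proposition8p4 (V : finType) (G : lgraph V) (T : {set V * 'I_3}) :
  lgraph_wf G -> gtransversal G T ->
  forall C D : {set V * 'I_3},
    C \subset T -> D \subset T -> [disjoint C & D] ->
    exists (H : lgraph V) (T' : {set V * 'I_3}),
      vertex_minor G H /\ gtransversal H T' /\
      miso (mminor (tmatroid G T) C D) (tmatroid H T').
Proof.
move=> wfG trT C D sCT sDT dCD.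
have [H [T' [mH _ trH iso]]] := tmatroid_minor_realizable wfG trT sCT sDT dCD.
by exists H, T'.
Qed.
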